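(* If $\sigma(x)/x\in\mathbb{Z}[\zeta_p]$, then the lattice $\varphi_{1/p^2}(M)$ (a rotated version of $D_n$) satisfies $d_{p,\min}(\varphi_{1/p^2}(M))\ge p^{(1-n)/2}$.
   Context: Let $n>1$ be an odd integer and $p$ a prime with $p\equiv 1 \pmod n$. Let $\zeta_p=e^{2\pi i/p}$, let $r$ be a primitive root modulo $p$, and let $\sigma$ be the automorphism of $\mathbb{Q}(\zeta_p)$ with $\sigma(\zeta_p)=\zeta_p^r$. Let $\mathbb{K}=\{y\in\mathbb{Q}(\zeta_p):\sigma^n(y)=y\}$ (totally real of degree $n$, embeddings into $\mathbb{R}$ given by restrictions of $\sigma^0,\dots,\sigma^{n-1}$). Let $\alpha=\prod_{j=0}^{(p-3)/2}(1-\zeta_p^{r^j})$, $\lambda$ an integer with $\lambda(r-1)\equiv1\pmod p$, $z=\zeta_p^{\lambda}\alpha(1-\zeta_p)$, $x=\mathrm{Tr}_{\mathbb{Q}(\zeta_p)/\mathbb{K}}(z)=\sum_{j=1}^{(p-1)/n}\sigma^{jn}(z)$. Let $M$ be the $\mathbb{Z}$-module generated by $x+\sigma(x),\ x-\sigma(x),\ \sigma(x)-\sigma^2(x),\dots,\sigma^{n-2}(x)-\sigma^{n-1}(x)$. For totally positive $\beta\in\mathbb{K}$, $\varphi_\beta(y)=(\sqrt{\sigma^0(\beta)}\sigma^0(y),\dots,\sqrt{\sigma^{n-1}(\beta)}\sigma^{n-1}(y))$. For a lattice $\Lambda\subset\mathbb{R}^n$ with all nonzero vectors having all coordinates nonzero,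 $d_{p,\min}(\Lambda)=\inf\{|y_1\cdots y_n|: 0\neq y\in\Lambda\}$. *)

From HB Require Import structures.
From mathcomp Require Import all_boot all_order all_algebra all_field.
Unset Printing Implicit Defensive.
Import Order.TTheory GRing.Theory Num.Theory.
Local Open Scope ring_scope.

(* All objects of the paper are polynomial expressions (integer coefficients,
   plus one integral power zeta^lambda) in zeta_p.  For such an expression E(zeta),
   sigma^k(E(zeta)) = E(zeta^(r^k)), since sigma^k is the ring automorphism
   zeta |-> zeta^(r^k).  We therefore define each object as a function of the
   root w that is plugged in. *)

Definition alphaf (p r : nat) (w : algC) : algC :=
  \prod_(j < ((p - 3) %/ 2).+1) (1 - w ^+ (r ^ j)).

Definition zf (p r : nat) (lam : int) (w : algC) : algC :=
  w ^ lam * alphaf p r w * (1 - w).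

(* x = Tr_{Q(zeta)/K}(z) = sum_{j=1}^{(p-1)/n} sigma^(j n)(z) *)
Definition xf (n p r : nat) (lam : int) (w : algC) : algC :=
  \sum_(1 <= j < ((p.-1) %/ n).+1) zf p r lam (w ^+ (r ^ (j * n))).

Definition sigx (n p r : nat) (lam : int) (zeta : algC) (k : nat) : algC :=
  xf n p r lam (zeta ^+ (r ^ k)).

(* sigma^k applied to the i-th generator of M:
   i = 0 : x + sigma(x);  i = 1 : x - sigma(x);
   i >= 2 : sigma^(i-1)(x) - sigma^i(x). *)
Definition genM (n p r : nat) (lam : int) (zeta : algC) (i k : nat) : algC :=
  let X := sigx n p r lam zeta in
  if i == 0%N then X k + X k.+1
  else if i == 1%N then X k - X k.+1
  else X (i.-1 + k)%N - X (i + k)%N.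

Definition sigM (n p r : nat) (lam : int) (zeta : algC) (c : 'I_n -> int) (k : nat)
  : algC := \sum_(i < n) (c i)%:~R * genM n p r lam zeta i k.

(* k-th coordinate of phi_beta(y) = sqrt(sigma^k(beta)) sigma^k(y); beta rational
   is fixed by sigma^k. *)
Definition phiM (beta : algC) (n p r : nat) (lam : int) (zeta : algC)
  (c : 'I_n -> int) (k : 'I_n) : algC :=
  sqrtC beta * sigM n p r lam zeta c k.

Definition in_Zzeta (zeta y : algC) : Prop :=
  exists q : {poly int}, y = (map_poly (fun a : int => a%:~R) q).[zeta].

(* The product of the coordinates of phi_{1/p^2}(y) is p^-n N(y), where N(y) is
   the product of the n conjugates sigma^k(y) of y in M.  Every conjugate is an
   integer polynomial in zeta, so N(y) is an algebraic integer; it is invariant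
   under zeta |-> zeta^r, and r generates (Z/pZ)^*, so N(y) is fixed by every
   automorphism, hence rational, hence a rational integer, nonzero when y is.
   Each conjugate of x is divisible by (1 - zeta)^((p+1)/2): one factor per
   term of alpha and one from (1 - zeta).  So (1 - zeta)^(n(p+1)/2) divides N(y);
   as (1 - zeta)^(p-1) is p times an algebraic integer, p^((n+1)/2) divides
   N(y), and |prod| >= p^-n p^((n+1)/2) = p^((1-n)/2). *)

From HB Require Import structures.
From mathcomp Require Import all_boot all_order all_algebra all_field.
From mathcomp Require Import zify ring.

Set Implicit Arguments.
Unset Strict Implicit.
Unset Printing Implicit Defensive.

Import Order.TTheory GRing.Theory Num.Theory.
Local Open Scope ring_scope.

Definition int_poly_fun (p : nat) (f : algC -> algC) := exists q : {poly int},
  forall w : algC, w ^+ p = 1 -> f w = (map_poly intr q).[w].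

Section IntPolyFun.
Context {p : nat}.
Implicit Types f g : algC -> algC.

Lemma int_poly_fun_ext f g : int_poly_fun p f ->
  (forall w, w ^+ p = 1 -> f w = g w) -> int_poly_fun p g.
Proof. by move=> [q Dq] fg; exists q => w wp; rewrite -fg ?Dq. Qed.

Lemma int_poly_fun_cst (a : int) : int_poly_fun p (fun=> a%:~R).
Proof. by exists a%:P => w _; rewrite map_polyC hornerC. Qed.

Lemma int_poly_fun1 : int_poly_fun p (fun=> 1).
Proof. by exists 1 => w _; rewrite rmorph1 hornerC. Qed.

Lemma int_poly_fun_id : int_poly_fun p (fun w => w).
Proof. by exists 'X => w _; rewrite map_polyX hornerX. Qed.

Lemma int_poly_funD f g :
  int_poly_fun p f -> int_poly_fun p g -> int_poly_fun p (fun w => f w + g w).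
Proof.
by move=> [q Dq] [s Ds]; exists (q + s) => w wp; rewrite rmorphD hornerD Dq ?Ds.
Qed.

Lemma int_poly_funN f : int_poly_fun p f -> int_poly_fun p (fun w => - f w).
Proof. by move=> [q Dq]; exists (- q) => w wp; rewrite rmorphN hornerN Dq. Qed.

Lemma int_poly_funB f g :
  int_poly_fun p f -> int_poly_fun p g -> int_poly_fun p (fun w => f w - g w).
Proof. by move=> ff /int_poly_funN; apply: int_poly_funD. Qed.

Lemma int_poly_funM f g :
  int_poly_fun p f -> int_poly_fun p g -> int_poly_fun p (fun w => f w * g w).
Proof.
by move=> [q Dq] [s Ds]; exists (q * s) => w wp; rewrite rmorphM hornerM Dq ?Ds.
Qed.

Lemma int_poly_fun_sum (I : Type) (s : seq I) (P : pred I) F :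
  (forall i, int_poly_fun p (F i)) ->
  int_poly_fun p (fun w => \sum_(i <- s | P i) F i w).
Proof.
move=> FP; elim: s => [|i s IHs].
  by apply: int_poly_fun_ext (int_poly_fun_cst 0) _ => w _; rewrite big_nil.
case: (boolP (P i)) => Pi.
  by apply: int_poly_fun_ext (int_poly_funD (FP i) IHs) _ => w _; rewrite big_cons Pi.
by apply: int_poly_fun_ext IHs _ => w _; rewrite big_cons (negbTE Pi).
Qed.

Lemma int_poly_fun_prod (I : Type) (s : seq I) (P : pred I) F :
  (forall i, int_poly_fun p (F i)) ->
  int_poly_fun p (fun w => \prod_(i <- s | P i) F i w).
Proof.
move=> FP; elim: s => [|i s IHs].
  by apply: int_poly_fun_ext (int_poly_fun_cst 1) _ => w _; rewrite big_nil.
case: (boolP (P i)) => Pi.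
  by apply: int_poly_fun_ext (int_poly_funM (FP i) IHs) _ => w _; rewrite big_cons Pi.
by apply: int_poly_fun_ext IHs _ => w _; rewrite big_cons (negbTE Pi).
Qed.

Lemma int_poly_fun_compX f m : int_poly_fun p f -> int_poly_fun p (fun w => f (w ^+ m)).
Proof.
move=> [q Dq]; exists (q \Po 'X^m) => w wp.
rewrite map_comp_poly horner_comp map_polyXn hornerXn Dq //.
by rewrite exprAC wp expr1n.
Qed.

(* On p-th roots of unity, negative powers are positive powers. *)
Lemma int_poly_fun_exprz (k : int) : (0 < p)%N -> int_poly_fun p (fun w => w ^ k).
Proof.
move=> p_gt0; exists 'X^`|(k %% p)%Z|%N => w wp; rewrite map_polyXn hornerXn.
have wU : w \is a GRing.unit.
  by rewrite unitfE; apply: contra_eq_neq wp => ->; rewrite expr0n gtn_eqF // eq_sym oner_eq0.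
have k_mod : (k %% p)%Z = `|(k %% p)%Z|%N.
  by rewrite gez0_abs // modz_ge0 // eqz_nat -lt0n.
rewrite {1}(divz_eq k p) exprzDr // {1}k_mod (mulrC (k %/ p)%Z) -exprz_exp.
by rewrite -exprnP wp exp1rz mul1r.
Qed.

Lemma int_poly_fun_aut (nu : {rmorphism algC -> algC}) f w :
  int_poly_fun p f -> w ^+ p = 1 -> nu (f w) = f (nu w).
Proof.
move=> [q Dq] wp; have nu_wp : nu w ^+ p = 1 by rewrite -rmorphXn wp rmorph1.
rewrite !Dq // -horner_map -map_poly_comp; congr (_.[_]).
by apply: eq_map_poly => a /=; rewrite rmorph_int.
Qed.

End IntPolyFun.

Section PrimRootTrace.
Variables (p : nat) (zeta : algC).
Hypothesis zeta_prim : p.-primitive_root zeta.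

Let zetap : zeta ^+ p = 1. Proof. exact: prim_expr_order. Qed.

Lemma sum_prim_root_expr_Cint i : \sum_(a < p) (zeta ^+ i) ^+ a \in Num.int.
Proof.
have [->|ne1] := eqVneq (zeta ^+ i) 1.
  by under eq_bigr do rewrite expr1n; rewrite sumr_const card_ord rpred_nat.
have : (zeta ^+ i - 1) * \sum_(a < p) (zeta ^+ i) ^+ a = 0.
  by rewrite -subrX1 exprAC zetap expr1n subrr.
by move/eqP; rewrite mulf_eq0 subr_eq0 (negbTE ne1) => /eqP ->.
Qed.

Lemma int_poly_fun_trace_Cint f :
  int_poly_fun p f -> \sum_(a < p) f (zeta ^+ a) \in Num.int.
Proof.
have zap a : (zeta ^+ a) ^+ p = 1 by rewrite exprAC zetap expr1n.
move=> [q Dq]; under eq_bigr => a _ do rewrite Dq // horner_coef.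
rewrite exchange_big rpred_sum // => i _; rewrite -mulr_sumr rpredM //.
  by rewrite coef_map rpred_int.
by under eq_bigr do rewrite exprAC; apply: sum_prim_root_expr_Cint.
Qed.

Lemma int_poly_fun_Aint f : int_poly_fun p f -> f zeta \in Aint.
Proof.
move=> [q Dq]; rewrite Dq // horner_coef rpred_sum // => i _.
by rewrite rpredM ?rpredX ?(Aint_prim_root zeta_prim) // coef_map Aint_int.
Qed.

Lemma int_poly_fun_Cint f : (1 < p)%N -> int_poly_fun p f ->
  (forall a, (0 < a < p)%N -> f (zeta ^+ a) = f zeta) -> f zeta \in Num.int.
Proof.
move=> p_gt1 fP f_conj; have /int_poly_fun_trace_Cint := fP.
rewrite -(prednK (ltnW p_gt1)) big_ord_recl.
rewrite (eq_bigr (fun=> f zeta)) => [|a _]; last first.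
  by apply: f_conj; rewrite lift0; have := ltn_ord a; lia.
rewrite sumr_const card_ord => trace_int.
have f1_int : f 1 \in Num.int.
  have [q ->] := fP; rewrite ?expr1n //.
  by rewrite -[X in _.[X]](rmorph1 (intr : int -> algC)) horner_map rpred_int.
apply: Cint_rat_Aint; last exact: int_poly_fun_Aint.
have pn0 : (p.-1%:R : algC) != 0.
  by rewrite pnatr_eq0 -lt0n -ltnS prednK // ltnW.
rewrite -(mulfK pn0 (f zeta)) mulr_natr rpred_div ?rpred_nat //.
have -> : f zeta *+ p.-1 = f (zeta ^+ 0) + f zeta *+ p.-1 - f 1.
  by rewrite expr0 addrAC subrr add0r.
by apply: rpredB; apply: rpred_int_num.
Qed.

End PrimRootTrace.

Definition normM (n p r : nat) (lam : int) (c : 'I_n -> int) (w : algC) : algC :=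
  \prod_(k < n) sigM n p r lam w c k.

Section LatticeIntPolyFun.
Variables (n p r : nat) (lam : int).
Hypothesis p_gt0 : (0 < p)%N.

Lemma int_poly_fun_zf : int_poly_fun p (zf p r lam).
Proof.
rewrite /zf /alphaf; apply: int_poly_funM (int_poly_funB int_poly_fun1 int_poly_fun_id).
apply: int_poly_funM (int_poly_fun_exprz lam p_gt0) _.
apply: int_poly_fun_prod => j.
exact: int_poly_funB int_poly_fun1 (int_poly_fun_compX _ int_poly_fun_id).
Qed.

Lemma int_poly_fun_sigx k : int_poly_fun p (fun w => sigx n p r lam w k).
Proof.
apply: int_poly_fun_compX; apply: int_poly_fun_sum => j.
exact: int_poly_fun_compX int_poly_fun_zf.
Qed.

Lemma int_poly_fun_sigM (c : 'I_n -> int) k : int_poly_fun p (fun w => sigM n p r lam w c k).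
Proof.
apply: int_poly_fun_sum => i; apply: int_poly_funM (int_poly_fun_cst _) _.
rewrite /genM; case: eqP => _.
  exact: int_poly_funD (int_poly_fun_sigx _) (int_poly_fun_sigx _).
by case: eqP => _; apply: int_poly_funB (int_poly_fun_sigx _) (int_poly_fun_sigx _).
Qed.

Lemma int_poly_fun_normM (c : 'I_n -> int) : int_poly_fun p (normM p r lam c).
Proof. by apply: int_poly_fun_prod => k; apply: int_poly_fun_sigM. Qed.

End LatticeIntPolyFun.

Section PrimeField.
Variable p : nat.
Hypothesis p_prime : prime p.

Lemma Fp_natr_eq a b : (a%:R : 'F_p) = b%:R -> (a = b %[mod p])%N.
Proof. by move/(congr1 val); rewrite /= !val_Fp_nat // Fp_cast. Qed.

Lemma Fp_expr_pred (x : 'F_p) : x != 0 -> x ^+ p.-1 = 1.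
Proof.
move=> x_nz; apply: (mulfI x_nz); rewrite mulr1 -exprS prednK ?prime_gt0 //.
by rewrite -[in RHS](expf_card x) card_Fp.
Qed.

Lemma expn_pred_mod_prime a : coprime p a -> (a ^ p.-1 = 1 %[mod p])%N.
Proof.
move=> co_pa; apply: Fp_natr_eq; rewrite natrX Fp_expr_pred //.
by rewrite -unitfE unitFpE.
Qed.

End PrimeField.

Lemma prodr_ord_shift (R : comRingType) m (g : nat -> R) :
  g m = g 0 -> \prod_(k < m) g k.+1 = \prod_(k < m) g k.
Proof.
case: m => [|m] gm; first by rewrite !big_ord0.
by rewrite big_ord_recr big_ord_recl /= gm mulrC.
Qed.

Section Conjugates.
Variables (n p r : nat) (lam : int).
Hypotheses (p_prime : prime p) (r_prim : (p.-1).-primitive_root (r%:R : 'F_p)).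
Hypothesis n_dvd : (n %| p.-1)%N.
Implicit Types (c : 'I_n -> int) (w : algC).

Lemma coprime_p_r : coprime p r.
Proof.
rewrite prime_coprime //; apply/negP => /dvdnP [m r_pm].
have := prim_expr_order r_prim; rewrite r_pm natrM pchar_Fp_0 // mulr0.
by rewrite expr0n -(prednK (prim_order_gt0 r_prim)) => /eqP; rewrite eq_sym oner_eq0.
Qed.

Lemma coprime_exp_r_p k : coprime (r ^ k) p.
Proof. by rewrite coprimeXl // coprime_sym coprime_p_r. Qed.

Lemma exp_r_pred_mod : (r ^ p.-1 = 1 %[mod p])%N.
Proof. by apply: (Fp_natr_eq p_prime); rewrite natrX (prim_expr_order r_prim). Qed.

Lemma coprime_eq_r_exp_mod a : coprime p a -> exists j, (a = r ^ j %[mod p])%N.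
Proof.
move=> co_pa; have a_nz : (a%:R : 'F_p) != 0 by rewrite -unitfE unitFpE.
have [j Dj] := prim_rootP r_prim (Fp_expr_pred p_prime a_nz).
by exists j; apply: (Fp_natr_eq p_prime); rewrite natrX.
Qed.

Lemma expr_exp_r_pred w : w ^+ p = 1 -> w ^+ (r ^ p.-1) = w.
Proof. by move=> wp; rewrite -(expr_mod _ wp) exp_r_pred_mod (expr_mod _ wp) expr1. Qed.

Lemma xf_exp_r_n w : w ^+ p = 1 -> xf n p r lam (w ^+ (r ^ n)) = xf n p r lam w.
Proof.
move=> wp; rewrite /xf; under eq_bigr do rewrite -exprM -expnD -mulSn.
have p1_gt0 : (0 < p.-1)%N by rewrite -subn1 subn_gt0 prime_gt1.
have : (0 < (p.-1) %/ n)%N by rewrite divn_gt0 (dvdn_gt0 p1_gt0, dvdn_leq).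
have e_n : ((p.-1) %/ n * n)%N = p.-1 by rewrite divnK.
case: ((p.-1) %/ n)%N e_n => [//|e] e_n _.
rewrite [LHS]big_nat_recr // [RHS]big_nat_recl //= addrC; congr (_ + _).
by rewrite mulSn expnD exprM e_n expr_exp_r_pred ?mul1n // exprAC wp expr1n.
Qed.

Lemma sigx_succ w k : sigx n p r lam (w ^+ r) k = sigx n p r lam w k.+1.
Proof. by rewrite /sigx -exprM expnS. Qed.

Lemma sigx_addn w k : w ^+ p = 1 -> sigx n p r lam w (k + n) = sigx n p r lam w k.
Proof. by move=> wp; rewrite /sigx expnD exprM xf_exp_r_n // exprAC wp expr1n. Qed.

Lemma sigM_succ w c k : sigM n p r lam (w ^+ r) c k = sigM n p r lam w c k.+1.
Proof. by apply: eq_bigr => i _; rewrite /genM !sigx_succ !addnS. Qed.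

Lemma sigM_exp_r w c k : sigM n p r lam w c k = sigM n p r lam (w ^+ (r ^ k)) c 0.
Proof.
elim: k w => [|k IHk] w; first by rewrite expr1.
by rewrite -sigM_succ IHk -exprM expnS.
Qed.

Lemma sigM_n w c : w ^+ p = 1 -> sigM n p r lam w c n = sigM n p r lam w c 0.
Proof.
move=> wp; have sigx_n k := sigx_addn k wp.
move: (sigx_n 0) (sigx_n 1); rewrite add0n add1n => sigx_n0 sigx_n1.
by apply: eq_bigr => i _; rewrite /genM sigx_n0 sigx_n1 !sigx_n !addn0.
Qed.

Lemma normM_exp_r w c : w ^+ p = 1 -> normM p r lam c (w ^+ r) = normM p r lam c w.
Proof.
move=> wp; rewrite /normM; under eq_bigr do rewrite sigM_succ.
exact: (prodr_ord_shift (sigM_n c wp)).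
Qed.

Lemma normM_exp_r_exp w c j :
  w ^+ p = 1 -> normM p r lam c (w ^+ (r ^ j)) = normM p r lam c w.
Proof.
move=> wp; elim: j => [|j IHj]; first by rewrite expr1.
by rewrite expnSr exprM normM_exp_r // exprAC wp expr1n.
Qed.

Variable zeta : algC.
Hypothesis zeta_prim : p.-primitive_root zeta.

Lemma normM_conj c a : coprime p a -> normM p r lam c (zeta ^+ a) = normM p r lam c zeta.
Proof.
case/coprime_eq_r_exp_mod => j a_rj.
by rewrite -(prim_expr_mod zeta_prim) a_rj prim_expr_mod // normM_exp_r_exp ?prim_expr_order.
Qed.

Lemma normM_Cint c : normM p r lam c zeta \in Num.int.
Proof.
apply: (int_poly_fun_Cint zeta_prim (prime_gt1 p_prime)).
  exact: int_poly_fun_normM (prime_gt0 p_prime) c.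
by move=> a /andP[a_gt0 a_lt_p]; rewrite normM_conj // prime_coprime // gtnNdvd.
Qed.

Lemma normM_neq0 c k : sigM n p r lam zeta c k != 0 -> normM p r lam c zeta != 0.
Proof.
have zp := prim_expr_order zeta_prim.
have sigM_aut j : {nu : {rmorphism algC -> algC} |
    sigM n p r lam zeta c j = nu (sigM n p r lam zeta c 0)}.
  have [nu nuE] := Qn_aut_exists (coprime_exp_r_p j); exists nu.
  have sigM0P := int_poly_fun_sigM r lam (prime_gt0 p_prime) c 0.
  by rewrite sigM_exp_r (int_poly_fun_aut nu sigM0P) // nuE.
case: (sigM_aut k) => nu -> nz0; apply/prodf_neq0 => j _.
by case: (sigM_aut j) => mu ->; rewrite fmorph_eq0 -(fmorph_eq0 nu).
Qed.

End Conjugates.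

Lemma dvdAP (e x : algC) : reflect (exists2 y, y \in Aint & x = y * e) (e %| x)%A.
Proof.
rewrite unfold_in; have [->|e_nz] := eqVneq e 0.
  by apply: (iffP eqP) => [->|[y _ ->]]; [exists 0; rewrite ?Aint0 ?mul0r|rewrite mulr0].
by apply: (iffP idP) => [Ax|[y Ay ->]]; [exists (x / e); rewrite ?divfK|rewrite mulfK].
Qed.

Lemma dvdAM e1 e2 x1 x2 : (e1 %| x1)%A -> (e2 %| x2)%A -> (e1 * e2 %| x1 * x2)%A.
Proof.
move=> /dvdAP[y1 Ay1 ->] /dvdAP[y2 Ay2 ->]; apply/dvdAP; exists (y1 * y2).
  exact: rpredM.
by rewrite mulrACA.
Qed.

Lemma dvdA_mull e x y : y \in Aint -> (e %| x)%A -> (e %| y * x)%A.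
Proof. by move=> Ay /dvdAP[z Az ->]; apply/dvdAP; exists (y * z); rewrite ?rpredM ?mulrA. Qed.

Lemma dvdA_prod (I : eqType) (s : seq I) (E F : I -> algC) :
  {in s, forall i, (E i %| F i)%A} -> (\prod_(i <- s) E i %| \prod_(i <- s) F i)%A.
Proof.
rewrite !big_seq => EF; apply: (big_ind2 (fun e x => (e %| x)%A)) => [|e1 e2 x1 x2|//].
  by apply/dvdAP; exists 1; rewrite ?Aint1 ?mul1r.
exact: dvdAM.
Qed.

Lemma dvdA_prod_ord (e : algC) m (F : 'I_m -> algC) :
  (forall i, (e %| F i)%A) -> (e ^+ m %| \prod_(i < m) F i)%A.
Proof.
have -> : e ^+ m = \prod_(i < m) e by rewrite prodr_const card_ord.
by move=> eF; apply: dvdA_prod => i _.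
Qed.

Lemma dvdA_one_sub_expr x k : x \in Aint -> (1 - x %| 1 - x ^+ k)%A.
Proof.
move=> Ax; apply/dvdAP; exists (\sum_(i < k) x ^+ i).
  by rewrite rpred_sum // => i _; apply: rpredX.
by rewrite -opprB subrX1 -mulNr opprB mulrC.
Qed.

Lemma prim_root_prod_one_sub m (z : algC) :
  m.-primitive_root z -> m%:R = \prod_(1 <= i < m) (1 - z ^+ i).
Proof.
move=> z_prim; have m_gt0 := prim_order_gt0 z_prim.
have := factor_Xn_sub_1 z_prim.
rewrite big_ltn // expr0 polyC1 subrX1.
have nz : ('X - 1 : {poly algC}) != 0 by rewrite -polyC1 polyXsubC_eq0.
move/(mulfI nz)/(congr1 (horner^~ 1)); rewrite /= horner_prod horner_sum.
under eq_bigr do rewrite hornerXsubC.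
under [in RHS]eq_bigr do rewrite hornerXn expr1n.
by rewrite sumr_const card_ord => ->.
Qed.

Section OneSubPrimRoot.
Variables (p : nat) (zeta : algC).
Hypotheses (p_prime : prime p) (zeta_prim : p.-primitive_root zeta).

Let p_nz : (p%:R : algC) != 0. Proof. by rewrite pnatr_eq0 -lt0n prime_gt0. Qed.

(* p = prod_(0 < i < p) (1 - zeta ^+ i), and each factor divides 1 - zeta since
   zeta = (zeta ^+ i) ^+ (i ^ p.-2) by Fermat. *)
Lemma dvdA_prime_one_sub_pow : (p%:R %| (1 - zeta) ^+ p.-1)%A.
Proof.
have zA : zeta \in Aint by apply: Aint_prim_root zeta_prim.
rewrite (prim_root_prod_one_sub zeta_prim) -[p.-1]subn1 -prodr_const_nat.
apply: dvdA_prod => i; rewrite mem_index_iota => /andP[i_gt0 i_lt_p].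
have p1_gt0 : (0 < p.-1)%N by rewrite -subn1 subn_gt0 prime_gt1.
have zeta_eq : zeta = (zeta ^+ i) ^+ (i ^ p.-2).
  rewrite -exprM -expnS prednK // -(prim_expr_mod zeta_prim).
  rewrite expn_pred_mod_prime ?modn_small ?prime_gt1 ?expr1 //.
  by rewrite prime_coprime // gtnNdvd.
by rewrite [X in (_ %| 1 - X)%A]zeta_eq dvdA_one_sub_expr // rpredX.
Qed.

Lemma dvdC_prime_of_dvdA_one_sub g : g \in Num.int -> (1 - zeta %| g)%A -> (p%:R %| g)%C.
Proof.
move=> /intrP[m ->] /dvdAP[y Ay Dm].
have : (p%:R %| (m ^+ p.-1)%:~R)%A.
  by rewrite rmorphXn /= Dm exprMn dvdA_mull ?rpredX ?dvdA_prime_one_sub_pow.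
case/dvdAP=> z Az Dz; have : (p%:R %| (m ^+ p.-1)%:~R)%C.
  apply/dvdCP; exists z => //; apply: Cint_rat_Aint => //.
  by rewrite -(mulfK p_nz z) -Dz rpred_div ?rpred_int ?rpred_nat.
by rewrite !dvdC_int ?rpred_int // !intrKfloor abszX Euclid_dvdX // => /andP[].
Qed.

Lemma dvdA_one_sub_div_prime_exp N s g :
  ((1 - zeta) ^+ N %| g)%A -> (p.-1 * s < N)%N -> (1 - zeta %| g / p%:R ^+ s)%A.
Proof.
move=> /dvdAP[W AW ->] lt_N; have [V AV DV] := dvdAP _ _ dvdA_prime_one_sub_pow.
have [d ->] : exists d, N = (d.+1 + p.-1 * s)%N by exists (N - p.-1 * s).-1; lia.
have zA : 1 - zeta \in Aint by rewrite rpredB ?Aint1 ?(Aint_prim_root zeta_prim).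
apply/dvdAP; exists (W * V ^+ s * (1 - zeta) ^+ d); first by rewrite !rpredM ?rpredX.
rewrite exprD exprM DV exprMn exprSr.
field; exact: expf_neq0.
Qed.

Lemma dvdC_prime_exp_of_dvdA N s g : g \in Num.int ->
  ((1 - zeta) ^+ N %| g)%A -> (p.-1 * s < N)%N -> (p%:R ^+ s.+1 %| g)%C.
Proof.
move=> gZ gN; elim: s => [|s IHs] lt_N.
  apply: dvdC_prime_of_dvdA_one_sub => //.
  by have := dvdA_one_sub_div_prime_exp gN lt_N; rewrite expr0 divr1.
have /dvdCP[h hZ Dg] : (p%:R ^+ s.+1 %| g)%C.
  by apply: IHs; apply: leq_ltn_trans lt_N; rewrite leq_mul2l leqnSn orbT.
have : (1 - zeta %| h)%A.
  by have := dvdA_one_sub_div_prime_exp gN lt_N; rewrite Dg mulfK ?expf_neq0.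
move/(dvdC_prime_of_dvdA_one_sub hZ)/dvdCP => [h' h'Z Dh].
by apply/dvdCP; exists h' => //; rewrite Dg Dh -mulrA -exprS.
Qed.

End OneSubPrimRoot.

Section NormDivisibility.
Variables (n p r : nat) (lam : int) (zeta : algC).
Hypothesis zeta_prim : p.-primitive_root zeta.
Implicit Types c : 'I_n -> int.

Let zetaA : zeta \in Aint. Proof. exact: Aint_prim_root zeta_prim. Qed.

Lemma dvdA_zf b : ((1 - zeta) ^+ ((p - 3) %/ 2).+2 %| zf p r lam (zeta ^+ b))%A.
Proof.
have p_gt0 := prim_order_gt0 zeta_prim.
rewrite /zf -mulrA exprSr; apply: dvdA_mull; last apply: dvdAM.
- exact: (int_poly_fun_Aint zeta_prim (int_poly_fun_compX b (int_poly_fun_exprz lam p_gt0))).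
- by apply: dvdA_prod_ord => j; rewrite -exprM dvdA_one_sub_expr.
- by rewrite dvdA_one_sub_expr.
Qed.

Lemma dvdA_sigM c k : ((1 - zeta) ^+ ((p - 3) %/ 2).+2 %| sigM n p r lam zeta c k)%A.
Proof.
have sigxP j : ((1 - zeta) ^+ ((p - 3) %/ 2).+2 %| sigx n p r lam zeta j)%A.
  by rewrite rpred_sum // => i _; rewrite -exprM dvdA_zf.
rewrite rpred_sum // => i _; rewrite mulrzl rpredMz // /genM.
by case: eqP => _; [rewrite rpredD | case: eqP => _; rewrite rpredB].
Qed.

Lemma dvdA_normM c : ((1 - zeta) ^+ (n * ((p - 3) %/ 2).+2) %| normM p r lam c zeta)%A.
Proof.
by rewrite mulnC exprM; apply: dvdA_prod_ord => k; apply: dvdA_sigM.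
Qed.

End NormDivisibility.

Lemma dvdC_norm_le (e x : algC) : (e %| x)%C -> x != 0 -> `|e| <= `|x|.
Proof.
case/dvdCP=> z zZ ->; rewrite mulf_eq0 negb_or => /andP[z_nz _].
by rewrite normrM ler_peMl ?norm_intr_ge1.
Qed.

Lemma prod_phiM beta n p r lam zeta (c : 'I_n -> int) :
  \prod_(k < n) phiM beta n p r lam zeta c k = sqrtC beta ^+ n * normM p r lam c zeta.
Proof. by rewrite big_split prodr_const card_ord. Qed.

Lemma predn_mul_half_lt n p : odd n ->
  (p.-1 * ((n - 1) %/ 2) < n * ((p - 3) %/ 2).+2)%N.
Proof. by move=> n_odd; have := odd_double_half n; rewrite n_odd; nia. Qed.

Lemma odd_half_split n : odd n -> n = ((n - 1) %/ 2 + ((n - 1) %/ 2).+1)%N.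
Proof. by move=> n_odd; have := odd_double_half n; rewrite n_odd; lia. Qed.

Theorem corollary2 (n p r : nat) (lam : int) (zeta : algC) :
  odd n -> (1 < n)%N -> prime p -> p = 1 %[mod n] ->
  (p.-1).-primitive_root (r%:R : 'F_p) ->
  (lam * (r%:Z - 1) = 1 %[mod p%:Z])%Z ->
  p.-primitive_root zeta ->
  in_Zzeta zeta (sigx n p r lam zeta 1 / sigx n p r lam zeta 0) ->
  forall c : 'I_n -> int,
    (exists k : 'I_n, phiM ((p%:R ^+ 2)^-1) n p r lam zeta c k != 0) ->
    (p%:R : algC) ^- ((n - 1) %/ 2) <=
      `| \prod_(k < n) phiM ((p%:R ^+ 2)^-1) n p r lam zeta c k |.
Proof.
move=> n_odd n_gt1 p_prime p_mod r_prim _ zeta_prim _ c [k phik_nz].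
have n_dvd : (n %| p.-1)%N by rewrite -subn1 -eqn_mod_dvd ?prime_gt0 // p_mod.
have sigk_nz : sigM n p r lam zeta c k != 0.
  by apply: contraNneq phik_nz; rewrite /phiM => ->; rewrite mulr0.
have N_int := normM_Cint lam p_prime r_prim n_dvd zeta_prim c.
have N_nz := normM_neq0 p_prime r_prim zeta_prim sigk_nz.
have N_dvd := dvdC_prime_exp_of_dvdA p_prime zeta_prim N_int
  (dvdA_normM r lam zeta_prim c) (predn_mul_half_lt p n_odd).
set s := ((n - 1) %/ 2)%N in N_dvd *.
have p_gt0 : (0 : algC) < p%:R by rewrite ltr0n prime_gt0.
have := dvdC_norm_le N_dvd N_nz; rewrite ger0_norm ?exprn_ge0 ?ler0n // => N_ge.
rewrite prod_phiM -exprVn sqrCK ?invr_ge0 ?ler0n // normrM normrX.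
rewrite ger0_norm ?invr_ge0 ?ler0n //.
have -> : p%:R^-1 ^+ n = p%:R ^- s * (p%:R ^+ s.+1)^-1 :> algC.
  by rewrite -!exprVn -exprD -odd_half_split.
rewrite -mulrA ler_peMr ?invr_ge0 ?exprn_ge0 ?ler0n //.
by rewrite mulrC ler_pdivlMr ?exprn_gt0 // mul1r.
Qed.
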